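(* Let $(L,[\cdot,\cdot],\{\cdot,\cdot,\cdot\},\alpha)$ be a Hom-Lie-Yamaguti algebra over a field $\mathbb{K}$. Then the coboundary operators are well defined, i.e.: (1) if $f\in HomC^1(L,L)$, then $\delta_I^1 f\in HomC^2(L,L)$ and $\delta_{II}^1 f\in HomC^3(L,L)$; (2) if $(f,g)\in HomC^2(L,L)\times HomC^3(L,L)$, then $\delta_I^2(f,g)\in HomC^4(L,L)$ and $\delta_{II}^2 g\in HomC^5(L,L)$; (3) if $(f,g)\in HomC^4(L,L)\times HomC^5(L,L)$, then $\delta_I^3(f,g)\in HomC^6(L,L)$ and $\delta_{II}^3 g\in HomC^7(L,L)$.
   Context: A Hom-Lie-Yamaguti algebra (HLYA) is a quadruple $(L,[\cdot,\cdot],\{\cdot,\cdot,\cdot\},\alpha)$ where $L$ is a vector space over a field $\mathbb{K}$, $[\cdot,\cdot]$ is a bilinear and $\{\cdot,\cdot,\cdot\}$ a trilinear operation on $L$ (written $[xy]$, $\{xyz\}$), and $\alpha:L\to L$ is linear, such that for all $x,y,z,u,v\in L$: $\alpha([xy])=[\alpha(x)\alpha(y)]$; $\alpha(\{xyz\})=\{\alpha(x)\alpha(y)\alpha(z)\}$; $[xx]=0$; $\{xxy\}=0$; $\circlearrowleft_{x,y,z}([[xy]\alpha(z)]+\{xyz\})=0$; $\circlearrowleft_{x,y,z}\{[xy]\alpha(z)\alpha(u)\}=0$; $\{\alpha(x)\alpha(y)[uv]\}=[\{xyu\}\alpha^2(v)]+[\alpha^2(u)\{xyv\}]$; $\{\alpha^2(u)\alpha^2(v)\{xyz\}\}=\{\{uvx\}\alpha^2(y)\alpha^2(z)\}+\{\alpha^2(x)\{uvy\}\alpha^2(z)\}+\{\alpha^2(x)\alpha^2(y)\{uvz\}\}$.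 Here $\circlearrowleft_{x,y,z}$ denotes the sum over cyclic permutations of $x,y,z$. For $n\ge1$, $HomC^n(L,L)$ is the set of $n$-linear maps $f:L^n\to L$ such that $f(x_1,\dots,x_n)=0$ whenever $x_{2i-1}=x_{2i}$ for some $i$ (with $2i\le n$), and $f(\alpha(x_1),\dots,\alpha(x_n))=\alpha(f(x_1,\dots,x_n))$. Coboundary operators: For $f\in HomC^1(L,L)$: $\delta_I^1 f(x,y)=[xf(y)]+[f(x)y]-f([xy])$, $\delta_{II}^1 f(x,y,z)=\{f(x)yz\}+\{xf(y)z\}+\{xyf(z)\}-f(\{xyz\})$. For $f\in HomC^2(L,L)$, $g\in HomC^3(L,L)$: $\delta_I^2(f,g)(x,y,z,u)=\{\alpha(x)\alpha(y)f(z,u)\}-f(\{xyz\},\alpha^2(u))-f(\alpha^2(z),\{xyu\})+g(\alpha(x),\alpha(y),[zu])-[\alpha^2(z)g(x,y,u)]-[g(x,y,z)\alpha^2(u)]$, and $\delta_{II}^2 g(x,y,u,v,w)=\{\alpha^2(x)\alpha^2(y)g(u,v,w)\}-\{g(x,y,u)\alpha^2(v)\alpha^2(w)\}-\{\alpha^2(u)g(x,y,v)\alpha^2(w)\}-\{\alpha^2(u)\alpha^2(v)g(x,y,w)\}+g(\alpha^2(x),\alpha^2(y),\{uvw\})-g(\{xyu\},\alpha^2(v),\alpha^2(w))-g(\alpha^2(u),\{xyv\},\alpha^2(w))-g(\alpha^2(u),\alpha^2(v),\{xyw\})$. For $f\in HomC^4(L,L)$, $g\in HomC^5(L,L)$: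 $\delta_I^3(f,g)(x_1,\dots,x_6)=\{\alpha^3(x_1)\alpha^3(x_2)f(x_3,x_4,x_5,x_6)\}-\{\alpha^3(x_3)\alpha^3(x_4)f(x_1,x_2,x_5,x_6)\}+\sum_{k=1}^2\sum_{i=2k+1}^6(-1)^k f(\alpha^2(x_1),\dots,\widehat{\alpha^2(x_{2k-1})},\widehat{\alpha^2(x_{2k})},\dots,\{x_{2k-1}x_{2k}x_i\},\dots,\alpha^2(x_6))-g(\alpha(x_1),\dots,\alpha(x_4),[x_5x_6])+[\alpha^4(x_5)g(x_1,\dots,x_4,x_6)]+[g(x_1,\dots,x_5)\alpha^4(x_6)]$, $\delta_{II}^3 g(x_1,\dots,x_7)=\sum_{k=1}^3(-1)^{k+1}\{\alpha^4(x_{2k-1})\alpha^4(x_{2k})g(x_1,\dots,\widehat{x_{2k-1}},\widehat{x_{2k}},\dots,x_7)\}+\sum_{k=1}^3\sum_{i=2k+1}^7(-1)^k g(\alpha^2(x_1),\dots,\widehat{\alpha^2(x_{2k-1})},\widehat{\alpha^2(x_{2k})},\dots,\{x_{2k-1}x_{2k}x_i\},\dots,\alpha^2(x_7))+\{g(x_1,\dots,x_5)\alpha^4(x_6)\alpha^4(x_7)\}-\{g(x_1,\dots,x_4,x_6)\alpha^4(x_5)\alpha^4(x_7)\}$. A hat means the entry is omitted; in the double sums the arguments are $\alpha^2(x_j)$ for all $j\notin\{2k-1,2k\}$ in increasing order, except that the entry in position of $x_i$ is replaced by $\{x_{2k-1}x_{2k}x_i\}$. *)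

From HB Require Import structures.
From mathcomp Require Import all_boot all_order all_algebra.
Set Implicit Arguments. Unset Strict Implicit. Unset Printing Implicit Defensive.
Import GRing.Theory.
Local Open Scope ring_scope.

Section HLY.
Variables (K : fieldType) (L : lmodType K).

(* An n-ary map is a function on argument vectors 'I_n -> L;
   argument x_{k+1} of the paper is x (k : 'I_n) here (0-based). *)

Definition upd n (x : 'I_n -> L) (i : 'I_n) (v : L) : 'I_n -> L :=
  fun j => if j == i then v else x j.

Definition args n (s : seq L) : 'I_n -> L := fun i => nth 0 s i.
Arguments args : clear implicits.
Arguments args n%_N s.

Definition multilinear n (f : ('I_n -> L) -> L) : Prop :=
  forall (x : 'I_n -> L) (i : 'I_n) (a : K) (u v : L),
    f (upd x i (a *: u + v)) = a *: f (upd x i u) + f (upd x i v).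

Definition HomC (alpha : L -> L) n (f : ('I_n -> L) -> L) : Prop :=
  [/\ multilinear f,
      (* f(x_1,..,x_n) = 0 whenever x_{2i-1} = x_{2i} (2i <= n);
         0-based: x_j = x_{j+1} with j even *)
      (forall (x : 'I_n -> L) (i j : 'I_n),
          ~~ odd i -> (j : nat) = i.+1 -> x i = x j -> f x = 0)
    & (forall x : 'I_n -> L, f (fun i => alpha (x i)) = alpha (f x))].

Record HLYA (br : L -> L -> L) (tr : L -> L -> L -> L) (alpha : L -> L) : Prop := {
  alpha_lin : forall (a : K) (x y : L), alpha (a *: x + y) = a *: alpha x + alpha y;
  br_lin1 : forall (a : K) (x y z : L), br (a *: x + y) z = a *: br x z + br y z;
  br_lin2 : forall (a : K) (x y z : L), br z (a *: x + y) = a *: br z x + br z y;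
  tr_lin1 : forall (a : K) (x y z w : L),
      tr (a *: x + y) z w = a *: tr x z w + tr y z w;
  tr_lin2 : forall (a : K) (x y z w : L),
      tr z (a *: x + y) w = a *: tr z x w + tr z y w;
  tr_lin3 : forall (a : K) (x y z w : L),
      tr z w (a *: x + y) = a *: tr z w x + tr z w y;
  alpha_br : forall x y, alpha (br x y) = br (alpha x) (alpha y);
  alpha_tr : forall x y z, alpha (tr x y z) = tr (alpha x) (alpha y) (alpha z);
  br_xx : forall x, br x x = 0;
  tr_xxy : forall x y, tr x x y = 0;
  hly_cyc1 : forall x y z,
      (br (br x y) (alpha z) + tr x y z) + (br (br y z) (alpha x) + tr y z x)
      + (br (br z x) (alpha y) + tr z x y) = 0;
  hly_cyc2 : forall x y z u,
      tr (br x y) (alpha z) (alpha u) + tr (br y z) (alpha x) (alpha u)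
      + tr (br z x) (alpha y) (alpha u) = 0;
  hly_der1 : forall x y u v,
      tr (alpha x) (alpha y) (br u v)
      = br (tr x y u) (alpha (alpha v)) + br (alpha (alpha u)) (tr x y v);
  hly_der2 : forall x y z u v,
      tr (alpha (alpha u)) (alpha (alpha v)) (tr x y z)
      = tr (tr u v x) (alpha (alpha y)) (alpha (alpha z))
        + tr (alpha (alpha x)) (tr u v y) (alpha (alpha z))
        + tr (alpha (alpha x)) (alpha (alpha y)) (tr u v z)
}.

Variables (br : L -> L -> L) (tr : L -> L -> L -> L) (alpha : L -> L).

Local Notation a1 := alpha.
Local Notation a2 := (fun v => alpha (alpha v)).
Local Notation a3 := (fun v => alpha (alpha (alpha v))).
Local Notation a4 := (fun v => alpha (alpha (alpha (alpha v)))).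

Definition deltaI1 (f : ('I_1 -> L) -> L) : ('I_2 -> L) -> L :=
  fun X => let x := X (inord 0) in let y := X (inord 1) in
  br x (f (args 1 [:: y])) + br (f (args 1 [:: x])) y - f (args 1 [:: br x y]).

Definition deltaII1 (f : ('I_1 -> L) -> L) : ('I_3 -> L) -> L :=
  fun X => let x := X (inord 0) in let y := X (inord 1) in let z := X (inord 2) in
  tr (f (args 1 [:: x])) y z + tr x (f (args 1 [:: y])) z
  + tr x y (f (args 1 [:: z])) - f (args 1 [:: tr x y z]).

Definition deltaI2 (f : ('I_2 -> L) -> L) (g : ('I_3 -> L) -> L)
  : ('I_4 -> L) -> L :=
  fun X => let x := X (inord 0) in let y := X (inord 1) in
           let z := X (inord 2) in let u := X (inord 3) in
  tr (a1 x) (a1 y) (f (args 2 [:: z; u]))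
  - f (args 2 [:: tr x y z; a2 u])
  - f (args 2 [:: a2 z; tr x y u])
  + g (args 3 [:: a1 x; a1 y; br z u])
  - br (a2 z) (g (args 3 [:: x; y; u]))
  - br (g (args 3 [:: x; y; z])) (a2 u).

Definition deltaII2 (g : ('I_3 -> L) -> L) : ('I_5 -> L) -> L :=
  fun X => let x := X (inord 0) in let y := X (inord 1) in
           let u := X (inord 2) in let v := X (inord 3) in let w := X (inord 4) in
  tr (a2 x) (a2 y) (g (args 3 [:: u; v; w]))
  - tr (g (args 3 [:: x; y; u])) (a2 v) (a2 w)
  - tr (a2 u) (g (args 3 [:: x; y; v])) (a2 w)
  - tr (a2 u) (a2 v) (g (args 3 [:: x; y; w]))
  + g (args 3 [:: a2 x; a2 y; tr u v w])
  - g (args 3 [:: tr x y u; a2 v; a2 w])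
  - g (args 3 [:: a2 u; tr x y v; a2 w])
  - g (args 3 [:: a2 u; a2 v; tr x y w]).

(* the double sums are written out term by term *)
Definition deltaI3 (f : ('I_4 -> L) -> L) (g : ('I_5 -> L) -> L)
  : ('I_6 -> L) -> L :=
  fun X => let x1 := X (inord 0) in let x2 := X (inord 1) in
           let x3 := X (inord 2) in let x4 := X (inord 3) in
           let x5 := X (inord 4) in let x6 := X (inord 5) in
  tr (a3 x1) (a3 x2) (f (args 4 [:: x3; x4; x5; x6]))
  - tr (a3 x3) (a3 x4) (f (args 4 [:: x1; x2; x5; x6]))
  (* k = 1, i = 3..6, sign -1 *)
  - f (args 4 [:: tr x1 x2 x3; a2 x4; a2 x5; a2 x6])
  - f (args 4 [:: a2 x3; tr x1 x2 x4; a2 x5; a2 x6])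
  - f (args 4 [:: a2 x3; a2 x4; tr x1 x2 x5; a2 x6])
  - f (args 4 [:: a2 x3; a2 x4; a2 x5; tr x1 x2 x6])
  (* k = 2, i = 5..6, sign +1 *)
  + f (args 4 [:: a2 x1; a2 x2; tr x3 x4 x5; a2 x6])
  + f (args 4 [:: a2 x1; a2 x2; a2 x5; tr x3 x4 x6])
  - g (args 5 [:: a1 x1; a1 x2; a1 x3; a1 x4; br x5 x6])
  + br (a4 x5) (g (args 5 [:: x1; x2; x3; x4; x6]))
  + br (g (args 5 [:: x1; x2; x3; x4; x5])) (a4 x6).

Definition deltaII3 (g : ('I_5 -> L) -> L) : ('I_7 -> L) -> L :=
  fun X => let x1 := X (inord 0) in let x2 := X (inord 1) in
           let x3 := X (inord 2) in let x4 := X (inord 3) in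
           let x5 := X (inord 4) in let x6 := X (inord 5) in
           let x7 := X (inord 6) in
  (* first sum, k = 1, 2, 3 with sign (-1)^(k+1) *)
  tr (a4 x1) (a4 x2) (g (args 5 [:: x3; x4; x5; x6; x7]))
  - tr (a4 x3) (a4 x4) (g (args 5 [:: x1; x2; x5; x6; x7]))
  + tr (a4 x5) (a4 x6) (g (args 5 [:: x1; x2; x3; x4; x7]))
  (* double sum, k = 1, i = 3..7, sign -1 *)
  - g (args 5 [:: tr x1 x2 x3; a2 x4; a2 x5; a2 x6; a2 x7])
  - g (args 5 [:: a2 x3; tr x1 x2 x4; a2 x5; a2 x6; a2 x7])
  - g (args 5 [:: a2 x3; a2 x4; tr x1 x2 x5; a2 x6; a2 x7])
  - g (args 5 [:: a2 x3; a2 x4; a2 x5; tr x1 x2 x6; a2 x7])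
  - g (args 5 [:: a2 x3; a2 x4; a2 x5; a2 x6; tr x1 x2 x7])
  (* k = 2, i = 5..7, sign +1 *)
  + g (args 5 [:: a2 x1; a2 x2; tr x3 x4 x5; a2 x6; a2 x7])
  + g (args 5 [:: a2 x1; a2 x2; a2 x5; tr x3 x4 x6; a2 x7])
  + g (args 5 [:: a2 x1; a2 x2; a2 x5; a2 x6; tr x3 x4 x7])
  (* k = 3, i = 7, sign -1 *)
  - g (args 5 [:: a2 x1; a2 x2; a2 x3; a2 x4; tr x5 x6 x7])
  + tr (g (args 5 [:: x1; x2; x3; x4; x5])) (a4 x6) (a4 x7)
  - tr (g (args 5 [:: x1; x2; x3; x4; x6])) (a4 x5) (a4 x7).

End HLY.

From HB Require Import structures.
From mathcomp Require Import all_boot all_order all_algebra.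
From Stdlib Require Import FunctionalExtensionality.
Set Implicit Arguments. Unset Strict Implicit. Unset Printing Implicit Defensive.
Import GRing.Theory.
Local Open Scope ring_scope.

(* Multilinearity holds because in every term of a coboundary each argument
   occurs exactly once, in a slot of a multilinear operation (f, g, [..],
   {...}, alpha).  Compatibility with alpha follows from alpha being
   multiplicative for [..] and {...} and commuting with f and g.  For the
   alternating property, once x_{2i-1} = x_{2i} every term either vanishes
   ([x x] = 0, {x x y} = 0, or a cochain with two equal adjacent arguments)
   or cancels against the neighbouring term by skew-symmetry of [..], of the
   first two slots of {...}, or of an argument pair of f or g. *)

Section LinearFunctions.
Variables (K : fieldType) (U V W : lmodType K).
Implicit Types (h : U -> V) (k : V -> W).

Lemma linear_funD h x y : linear h -> h (x + y) = h x + h y.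
Proof. by move=> hL; have := hL 1 x y; rewrite !scale1r. Qed.

Lemma linear_fun0 h : linear h -> h 0 = 0.
Proof. by move=> hL; apply: (@addrI _ (h 0)); rewrite -linear_funD // !addr0. Qed.

Lemma linear_funN h x : linear h -> h (- x) = - h x.
Proof.
by move=> hL; apply: (@addrI _ (h x)); rewrite -linear_funD // !subrr linear_fun0.
Qed.

Lemma linear_id : linear (@id U). Proof. by []. Qed.

Lemma linear_ext h1 h2 : h1 =1 h2 -> linear h2 -> linear h1.
Proof. by move=> eq_h h2L a u v; rewrite !eq_h h2L. Qed.

Lemma linear_add h1 h2 : linear h1 -> linear h2 -> linear (fun u => h1 u + h2 u).
Proof. by move=> h1L h2L a u v; rewrite h1L h2L scalerDr addrACA. Qed.

Lemma linear_sub h1 h2 : linear h1 -> linear h2 -> linear (fun u => h1 u - h2 u).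
Proof. by move=> h1L h2L a u v; rewrite h1L h2L scalerBr opprD addrACA. Qed.

Lemma linear_comp k h : linear k -> linear h -> linear (fun u => k (h u)).
Proof. by move=> kL hL a u v; rewrite hL kL. Qed.

End LinearFunctions.

Section ArgumentVectors.
Variables (K : fieldType) (L : lmodType K) (n : nat).
Implicit Types (f : ('I_n -> L) -> L) (s : seq L) (a b : L).

Lemma args_cat_upd (s1 s2 : seq L) a (lt_s1n : (size s1 < n)%N) :
  args (s1 ++ a :: s2) = upd (args (s1 ++ 0 :: s2)) (Ordinal lt_s1n) a.
Proof.
apply: functional_extensionality => j; rewrite /upd /args -val_eqE /= !nth_cat.
case: ltngtP => [//|lt_s1j|->]; last by rewrite subnn.
by case: (j - size s1)%N (subn_gt0 (size s1) j) => [|?]; rewrite ?lt_s1j.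
Qed.

Lemma updE (X : 'I_n.+1 -> L) i w k : (k <= n)%N ->
  upd X i w (inord k) = if k == val i then w else X (inord k).
Proof. by move=> le_kn; rewrite /upd -val_eqE /= inordK. Qed.

Lemma multilinear_args_slot f (s1 s2 : seq L) (h : L -> L) :
  multilinear f -> (size s1 < n)%N -> linear h ->
  linear (fun w => f (args (s1 ++ h w :: s2))).
Proof.
move=> fL lt_s1n; apply: (linear_comp (k := fun w => f (args (s1 ++ w :: s2)))).
move=> a u v; have slot_upd w := args_cat_upd s2 w lt_s1n.
by rewrite (slot_upd (a *: u + v)) (slot_upd u) (slot_upd v); apply: fL.
Qed.

Lemma multilinear_args_slot0 f (s1 s2 : seq L) :
  multilinear f -> (size s1 < n)%N -> f (args (s1 ++ 0 :: s2)) = 0.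
Proof.
move=> fL lt_s1n.
exact: linear_fun0 (multilinear_args_slot s2 fL lt_s1n (linear_id (U := L))).
Qed.

Variable alpha : L -> L.

Lemma HomC_multilinear f : HomC alpha f -> multilinear f.
Proof. by case. Qed.

Lemma HomC_args_pair0 f (s1 s2 : seq L) a :
  HomC alpha f -> ~~ odd (size s1) -> ((size s1).+1 < n)%N ->
  f (args (s1 ++ a :: a :: s2)) = 0.
Proof.
case=> _ f_alt _ even_s1 lt_s1n.
apply: (f_alt _ (Ordinal (ltnW lt_s1n)) (Ordinal lt_s1n)) => //=.
by rewrite /args !nth_cat ltnn subnn ltnNge leqnSn subSnn.
Qed.

Lemma HomC_args_pair_swap f (s1 s2 : seq L) a b :
  HomC alpha f -> ~~ odd (size s1) -> ((size s1).+1 < n)%N ->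
  f (args (s1 ++ a :: b :: s2)) + f (args (s1 ++ b :: a :: s2)) = 0.
Proof.
move=> fH even_s1 lt_s1n; have fL := HomC_multilinear fH.
have slot1 c := multilinear_args_slot (c :: s2) fL (ltnW lt_s1n) (linear_id (U := L)).
have slot2 c : linear (fun w => f (args (s1 ++ c :: w :: s2))).
  have lt_s1cn : (size (rcons s1 c) < n)%N by rewrite size_rcons.
  apply: linear_ext (multilinear_args_slot s2 fL lt_s1cn (linear_id (U := L))).
  by move=> w; rewrite cat_rcons.
have := HomC_args_pair0 s2 (a + b) fH even_s1 lt_s1n.
rewrite (linear_funD _ _ (slot1 _)) !(linear_funD _ _ (slot2 _)).
by rewrite !(HomC_args_pair0 _ _ fH even_s1 lt_s1n) add0r addr0.
Qed.

(* [args] pads the argument list with zeros, hence the hypothesis on alpha. *)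
Lemma HomC_args_map f s :
  HomC alpha f -> alpha 0 = 0 -> f (args (map alpha s)) = alpha (f (args s)).
Proof.
case=> _ _ f_alpha alpha0; rewrite -f_alpha; congr f.
apply: functional_extensionality => j; rewrite /args.
case: (ltnP j (size s)) => [lt_js|le_sj]; first by rewrite (nth_map 0).
by rewrite !nth_default ?size_map ?alpha0.
Qed.

End ArgumentVectors.

Lemma HomC_intro (K : fieldType) (L : lmodType K) (alpha : L -> L) n
    (F : ('I_n.+1 -> L) -> L) :
  (forall X i, linear (fun w => F (upd X i w))) ->
  (forall X k, ~~ odd k -> (k < n)%N -> X (inord k) = X (inord k.+1) -> F X = 0) ->
  (forall X, F (fun i => alpha (X i)) = alpha (F X)) ->
  HomC alpha F.
Proof.
move=> FL F_alt F_alpha; split=> [X i|X i j even_i def_j eqX|//]; first exact: FL.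
apply: (F_alt X i even_i); first by rewrite -ltnS -def_j.
by rewrite -def_j !inord_val.
Qed.

Section HLYAFacts.
Variables (K : fieldType) (L : lmodType K).
Variables (br : L -> L -> L) (tr : L -> L -> L -> L) (alpha : L -> L).
Hypothesis hL : HLYA br tr alpha.

Lemma alpha_linear : linear alpha. Proof. exact: alpha_lin hL. Qed.
Lemma br_linearl z : linear (br^~ z).
Proof. by move=> a u v; exact: br_lin1 hL a u v z. Qed.
Lemma br_linearr z : linear (br z).
Proof. by move=> a u v; exact: br_lin2 hL a u v z. Qed.
Lemma tr_linear1 y z : linear (fun x => tr x y z).
Proof. by move=> a u v; exact: tr_lin1 hL a u v y z. Qed.
Lemma tr_linear2 x z : linear (fun y => tr x y z).
Proof. by move=> a u v; exact: tr_lin2 hL a u v x z. Qed.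
Lemma tr_linear3 x y : linear (tr x y).
Proof. by move=> a u v; exact: tr_lin3 hL a u v x y. Qed.

Lemma alpha0 : alpha 0 = 0. Proof. exact: linear_fun0 alpha_linear. Qed.
Lemma alphaD x y : alpha (x + y) = alpha x + alpha y.
Proof. exact: linear_funD alpha_linear. Qed.
Lemma alphaN x : alpha (- x) = - alpha x. Proof. exact: linear_funN alpha_linear. Qed.

Lemma br0l x : br 0 x = 0. Proof. exact: linear_fun0 (br_linearl x). Qed.
Lemma br0r x : br x 0 = 0. Proof. exact: linear_fun0 (br_linearr x). Qed.
Lemma tr0l y z : tr 0 y z = 0. Proof. exact: linear_fun0 (tr_linear1 y z). Qed.
Lemma tr0m x z : tr x 0 z = 0. Proof. exact: linear_fun0 (tr_linear2 x z). Qed.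
Lemma tr0r x y : tr x y 0 = 0. Proof. exact: linear_fun0 (tr_linear3 x y). Qed.

Lemma br_skew x y : br x y + br y x = 0.
Proof.
have := br_xx hL (x + y).
rewrite (linear_funD _ _ (br_linearl _)) !(linear_funD _ _ (br_linearr _)).
by rewrite !(br_xx hL) add0r addr0.
Qed.

Lemma tr_skew x y z : tr x y z + tr y x z = 0.
Proof.
have := tr_xxy hL (x + y) z.
rewrite (linear_funD _ _ (tr_linear1 _ _)) !(linear_funD _ _ (tr_linear2 _ _)).
by rewrite !(tr_xxy hL) add0r addr0.
Qed.

End HLYAFacts.

Ltac linear_in_slot fH :=
  let fL := constr:(HomC_multilinear fH) in
  first [ eapply (multilinear_args_slot (s1 := [::]) _ fL isT)
        | eapply (multilinear_args_slot (s1 := [:: _]) _ fL isT)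
        | eapply (multilinear_args_slot (s1 := [:: _; _]) _ fL isT)
        | eapply (multilinear_args_slot (s1 := [:: _; _; _]) _ fL isT)
        | eapply (multilinear_args_slot (s1 := [:: _; _; _; _]) _ fL isT) ].

Ltac solve_linear hL fH gH := repeat first
  [ apply: linear_id | apply: linear_sub | apply: linear_add
  | eapply (linear_comp (alpha_linear hL))
  | eapply (linear_comp (br_linearl hL _)) | eapply (linear_comp (br_linearr hL _))
  | eapply (linear_comp (tr_linear1 hL _ _)) | eapply (linear_comp (tr_linear2 hL _ _))
  | eapply (linear_comp (tr_linear3 hL _ _))
  | linear_in_slot fH | linear_in_slot gH ].

Ltac prove_multilinear D hL fH gH :=
  move=> X [[|[|[|[|[|[|[|?]]]]]]] ?] //;
  (eapply linear_ext;
     [move=> w; rewrite /D !updE //=; reflexivity | solve_linear hL fH gH]).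

Ltac cochain_rules fH :=
  let fL := constr:(HomC_multilinear fH) in
  rewrite ?(multilinear_args_slot0 (s1 := [::]) _ fL isT)
    ?(multilinear_args_slot0 (s1 := [:: _]) _ fL isT)
    ?(multilinear_args_slot0 (s1 := [:: _; _]) _ fL isT)
    ?(multilinear_args_slot0 (s1 := [:: _; _; _]) _ fL isT)
    ?(multilinear_args_slot0 (s1 := [:: _; _; _; _]) _ fL isT)
    ?(HomC_args_pair0 (s1 := [::]) _ _ fH isT isT)
    ?(HomC_args_pair0 (s1 := [:: _; _]) _ _ fH isT isT)
    ?(HomC_args_pair_swap (s1 := [::]) _ _ _ fH isT isT)
    ?(HomC_args_pair_swap (s1 := [:: _; _]) _ _ _ fH isT isT).

(* Once the vanishing terms are gone, the two terms cancelling by skew-symmetry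
   are adjacent; [-opprD] merges them when both are negated. *)
Ltac cancel_terms hL fH gH := repeat progress (
  rewrite ?(br_xx hL) ?(tr_xxy hL) ?(br0l hL) ?(br0r hL) ?(tr0l hL) ?(tr0m hL)
    ?(tr0r hL) ?addr0 ?add0r ?subr0 ?sub0r ?oppr0 ?addrK -?opprD
    ?(br_skew hL) ?(tr_skew hL);
  cochain_rules fH; cochain_rules gH).

Ltac prove_alternating D hL fH gH :=
  move=> X [|[|[|[|[|[|[|?]]]]]]] //= _ _; rewrite /D => ->; cancel_terms hL fH gH; done.

Ltac prove_alpha_compat D hL fH gH :=
  move=> X; rewrite /D ?(alphaD hL) ?(alphaN hL);
  repeat progress rewrite /= ?(alpha_br hL) ?(alpha_tr hL)
    -?(HomC_args_map _ fH (alpha0 hL)) -?(HomC_args_map _ gH (alpha0 hL));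
  reflexivity.

Section Coboundaries.
Variables (K : fieldType) (L : lmodType K).
Variables (br : L -> L -> L) (tr : L -> L -> L -> L) (alpha : L -> L).
Hypothesis hL : HLYA br tr alpha.

Lemma deltaI1_HomC (f : ('I_1 -> L) -> L) :
  HomC alpha f -> HomC alpha (deltaI1 br f).
Proof.
move=> fH; apply: HomC_intro.
- prove_multilinear deltaI1 hL fH fH.
- prove_alternating deltaI1 hL fH fH.
- prove_alpha_compat deltaI1 hL fH fH.
Qed.

Lemma deltaII1_HomC (f : ('I_1 -> L) -> L) :
  HomC alpha f -> HomC alpha (deltaII1 tr f).
Proof.
move=> fH; apply: HomC_intro.
- prove_multilinear deltaII1 hL fH fH.
- prove_alternating deltaII1 hL fH fH.
- prove_alpha_compat deltaII1 hL fH fH.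
Qed.

Lemma deltaI2_HomC (f : ('I_2 -> L) -> L) (g : ('I_3 -> L) -> L) :
  HomC alpha f -> HomC alpha g -> HomC alpha (deltaI2 br tr alpha f g).
Proof.
move=> fH gH; apply: HomC_intro.
- prove_multilinear deltaI2 hL fH gH.
- prove_alternating deltaI2 hL fH gH.
- prove_alpha_compat deltaI2 hL fH gH.
Qed.

Lemma deltaII2_HomC (g : ('I_3 -> L) -> L) :
  HomC alpha g -> HomC alpha (deltaII2 tr alpha g).
Proof.
move=> gH; apply: HomC_intro.
- prove_multilinear deltaII2 hL gH gH.
- prove_alternating deltaII2 hL gH gH.
- prove_alpha_compat deltaII2 hL gH gH.
Qed.

Lemma deltaI3_HomC (f : ('I_4 -> L) -> L) (g : ('I_5 -> L) -> L) :
  HomC alpha f -> HomC alpha g -> HomC alpha (deltaI3 br tr alpha f g).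
Proof.
move=> fH gH; apply: HomC_intro.
- prove_multilinear deltaI3 hL fH gH.
- prove_alternating deltaI3 hL fH gH.
- prove_alpha_compat deltaI3 hL fH gH.
Qed.

Lemma deltaII3_HomC (g : ('I_5 -> L) -> L) :
  HomC alpha g -> HomC alpha (deltaII3 tr alpha g).
Proof.
move=> gH; apply: HomC_intro.
- prove_multilinear deltaII3 hL gH gH.
- prove_alternating deltaII3 hL gH gH.
- prove_alpha_compat deltaII3 hL gH gH.
Qed.

End Coboundaries.

Theorem mainTheorem1 (K : fieldType) (L : lmodType K)
  (br : L -> L -> L) (tr : L -> L -> L -> L) (alpha : L -> L)
  (hL : HLYA br tr alpha) :
  [/\ (forall f : ('I_1 -> L) -> L,
         HomC alpha f ->
         HomC alpha (deltaI1 br f) /\ HomC alpha (deltaII1 tr f)),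
      (forall (f : ('I_2 -> L) -> L) (g : ('I_3 -> L) -> L),
         HomC alpha f -> HomC alpha g ->
         HomC alpha (deltaI2 br tr alpha f g) /\ HomC alpha (deltaII2 tr alpha g))
    & (forall (f : ('I_4 -> L) -> L) (g : ('I_5 -> L) -> L),
         HomC alpha f -> HomC alpha g ->
         HomC alpha (deltaI3 br tr alpha f g) /\ HomC alpha (deltaII3 tr alpha g))].
Proof.
split=> [f fH|f g fH gH|f g fH gH].
- exact: conj (deltaI1_HomC hL fH) (deltaII1_HomC hL fH).
- exact: conj (deltaI2_HomC hL fH gH) (deltaII2_HomC hL gH).
- exact: conj (deltaI3_HomC hL fH gH) (deltaII3_HomC hL gH).
Qed.
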